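(* Let $\mathbf{A}$ be a structure such that there exists a retraction $r:\mathbf{A}\twoheadrightarrow\mathbf{A}^2$. Then $\operatorname{rank}(\operatorname{Pol}\mathbf{A}:\operatorname{End}\mathbf{A})=1$. More precisely, if $\epsilon:\mathbf{A}^2\hookrightarrow\mathbf{A}$ is a homomorphism with $r\circ\epsilon=1_{\mathbf{A}^2}$, then $\operatorname{Pol}\mathbf{A}$ is generated as a clone by $\operatorname{End}\mathbf{A}\cup\{\epsilon\}$, while $\operatorname{End}\mathbf{A}$ alone does not generate $\operatorname{Pol}\mathbf{A}$.
   Context: For a set $A$, $O_A^{(n)}$ is the set of functions $A^n\to A$, $O_A=\bigcup_{n\ge1}O_A^{(n)}$, projections are $e_i^n(x_1,\dots,x_n)=x_i$, and for $f\in O_A^{(n)}$, $g_1,\dots,g_n\in O_A^{(m)}$, $f\circ\langle g_1,\dots,g_n\rangle(\bar x)=f(g_1(\bar x),\dots,g_n(\bar x))$. A clone on $A$ is a subset of $O_A$ containing all projections and closed under this composition; $\langle M\rangle_{O_A}$ is the clone generated by $M\subseteq O_A$. For a structure $\mathbf{A}$, $\operatorname{Pol}\mathbf{A}$ is the clone of all homomorphisms $\mathbf{A}^n\to\mathbf{A}$ ($n\ge1$, $\mathbf{A}^n$ the direct power), and $\operatorname{End}\mathbf{A}$ is its unary part (the endomorphisms). For a clone $F$ and $M\subseteq F$, the relative rank $\operatorname{rank}(F:M)$ is the least cardinality of a set $N\subseteq F$ with $\langle M\cup N\rangle_{O_A}=F$. A homomorphism $r:\mathbf{A}\to\mathbf{B}$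 is a retraction if some homomorphism $\iota:\mathbf{B}\to\mathbf{A}$ (a section) satisfies $r\circ\iota=1_{\mathbf{B}}$. *)

From mathcomp Require Import all_boot.
Set Implicit Arguments. Unset Strict Implicit. Unset Printing Implicit Defensive.

Record signature := Signature { sym : Type; arity : sym -> nat }.

Record structure (S : signature) := Structure {
  carrier :> Type;
  rel : forall s : sym S, ('I_(arity s) -> carrier) -> Prop }.

Definition pow (S : signature) (A : structure S) (n : nat) : structure S :=
  @Structure S ('I_n -> A)
    (fun s t => forall j : 'I_n, @rel S A s (fun k => t k j)).

Definition hom (S : signature) (A B : structure S) (f : A -> B) : Prop :=
  forall (s : sym S) (t : 'I_(arity s) -> A), @rel S A s t -> @rel S B s (fun k => f (t k)).

Definition retraction (S : signature) (A B : structure S) (r : A -> B) : Prop :=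
  hom r /\ exists iota : B -> A, hom iota /\ forall b, r (iota b) = b.

(* Sets of operations on a type X: an n-ary operation is a map ('I_n -> X) -> X.
   Only arities n >= 1 are relevant (O_X = U_{n>=1} O_X^(n)). *)
Definition opset (X : Type) := forall n : nat, (('I_n -> X) -> X) -> Prop.

Definition opset_eq X (F G : opset X) : Prop :=
  forall n, 0 < n -> forall f, F n f <-> G n f.

Definition opset_sub X (F G : opset X) : Prop :=
  forall n, 0 < n -> forall f, F n f -> G n f.

Definition opset_union X (F G : opset X) : opset X := fun n f => F n f \/ G n f.

Definition op (X : Type) := {n : nat & ('I_n -> X) -> X}.

Definition opset_range X m (N : 'I_m -> op X) : opset X :=
  fun n f => exists j, N j = existT _ n f.

Definition proj X n (i : 'I_n) : ('I_n -> X) -> X := fun x => x i.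

Definition is_clone X (C : opset X) : Prop :=
  (forall n (i : 'I_n), C n (proj i)) /\
  (forall n m (f : ('I_n -> X) -> X) (g : 'I_n -> ('I_m -> X) -> X),
      0 < n -> 0 < m -> C n f -> (forall i, C m (g i)) ->
      C m (fun x => f (fun i => g i x))).

Definition gen X (M : opset X) : opset X :=
  fun n f => forall C, is_clone C -> opset_sub M C -> C n f.

Definition Pol (S : signature) (A : structure S) : opset A :=
  fun n f => @hom S (pow A n) A f.

Definition End (S : signature) (A : structure S) : opset A :=
  fun n f => n = 1 /\ @Pol S A n f.

Definition rel_gen_of_size X (F M : opset X) (m : nat) : Prop :=
  exists N : 'I_m -> op X,
    injective N /\ (forall j, F (projT1 (N j)) (projT2 (N j))) /\
    opset_eq (gen (opset_union M (opset_range N))) F.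

Definition rel_rank_eq X (F M : opset X) (k : nat) : Prop :=
  rel_gen_of_size F M k /\ forall m, m < k -> ~ rel_gen_of_size F M m.
Arguments Pol {S} A n f.
Arguments End {S} A n f.

From mathcomp Require Import all_boot.
From Stdlib Require Import FunctionalExtensionality.
Set Implicit Arguments. Unset Strict Implicit. Unset Printing Implicit Defensive.

(* An (n+2)-ary polymorphism f factors as
     f = (f o unpack) o pack,
   where [pack] merges the first two arguments into one via eps and [unpack]
   splits the first argument back into two via r.  Since r is a homomorphism,
   f o unpack is an (n+1)-ary polymorphism, and every coordinate of [pack] is
   built from eps and projections; induction on the arity reduces to the
   unary polymorphisms, i.e. to End A.

   Essentially unary operations (depending on one argument)
   form a clone containing End A.  Since r o eps = id, eps is injective, and on
   a structure with two distinct elements an injective binary operation is not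
   essentially unary; so the clone generated by End A misses eps. *)

Section Packing.
Variables (X : Type) (n : nat).

Definition pack_head (enc : ('I_2 -> X) -> X) (x : 'I_n.+2 -> X) : 'I_n.+1 -> X :=
  fun j => match unlift ord0 j with
           | None => enc (fun k => x (widen_ord (isT : 2 <= n.+2) k))
           | Some k => x (lift ord0 (lift ord0 k))
           end.

Definition unpack_head (dec : X -> 'I_2 -> X) (y : 'I_n.+1 -> X) : 'I_n.+2 -> X :=
  fun i => match unlift ord0 i with
           | None => dec (y ord0) ord0
           | Some i' => match unlift ord0 i' with
                        | None => dec (y ord0) ord_max
                        | Some k => y (lift ord0 k)
                        end
           end.

Lemma unpack_pack (enc : ('I_2 -> X) -> X) (dec : X -> 'I_2 -> X) :
  (forall x, dec (enc x) = x) -> forall x, unpack_head dec (pack_head enc x) = x.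
Proof.
move=> encK x; apply: functional_extensionality => i.
rewrite /unpack_head /pack_head unlift_none encK.
case: unliftP => [i' ->|->]; last by congr x; apply: val_inj.
case: unliftP => [k ->|->]; first by rewrite liftK.
by congr x; apply: val_inj.
Qed.
End Packing.

Lemma hom_comp S (A B C : structure S) (g : B -> C) (f : A -> B) :
  hom g -> hom f -> hom (g \o f).
Proof. by move=> hg hf s t /hf /hg. Qed.

(* Unpacking the head along a homomorphism [r : A -> A^2] is a homomorphism
   A^(n+1) -> A^(n+2), since every coordinate is a coordinate of [r] or a
   projection. *)
Lemma hom_unpack_head S (A : structure S) (r : A -> pow A 2) n :
  hom r -> @hom S (pow A n.+1) (pow A n.+2) (unpack_head r).
Proof.
move=> hr s t Ht i; rewrite /unpack_head.
case: (unlift ord0 i) => [i'|]; last exact: hr _ _ (Ht ord0) ord0.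
case: (unlift ord0 i') => [k|]; last exact: hr _ _ (Ht ord0) ord_max.
exact: Ht.
Qed.

Lemma Pol_clone S (A : structure S) : is_clone (Pol A).
Proof.
split=> [n i s t Ht | n m f g _ _ Hf Hg s t Ht]; first exact: Ht i.
by apply: (Hf s (fun k i => g i (t k))) => i; apply: Hg.
Qed.

Lemma gen_least X (M C : opset X) :
  is_clone C -> opset_sub M C -> opset_sub (gen M) C.
Proof. by move=> HC HMC n _ f; apply. Qed.

Section Generation.
Variables (S : signature) (A : structure S).
Variables (r : A -> pow A 2) (eps : pow A 2 -> A).
Hypotheses (hom_r : hom r) (epsK : forall x, r (eps x) = x).

Lemma pack_head_in_clone (C : opset A) n :
  is_clone C -> C 2 eps -> forall j, C n.+2 (fun x => pack_head eps x j).
Proof.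
move=> [Cproj Ccomp] Ceps j; rewrite /pack_head.
case: (unlift ord0 j) => [k|]; first exact: Cproj.
by apply: Ccomp => // k; apply: Cproj.
Qed.

(* Arity reduction: an (n+2)-ary polymorphism factors as an (n+1)-ary
   polymorphism after [pack_head eps]; hence, by induction on the arity,
   every clone containing End A and [eps] contains Pol A. *)
Lemma Pol_sub_clone (C : opset A) :
  is_clone C -> opset_sub (End A) C -> C 2 eps -> opset_sub (Pol A) C.
Proof.
move=> HC CEnd Ceps [//|n] _; elim: n => [|n IHn] f Pf.
  exact: CEnd.
have -> : f = (fun x => (f \o unpack_head r) (fun j => pack_head eps x j)).
  by apply: functional_extensionality => x /=; rewrite unpack_pack.
apply: HC.2 => //; first exact/IHn/(hom_comp Pf)/hom_unpack_head.
exact: pack_head_in_clone.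
Qed.
End Generation.

Lemma gen_End_section S (A : structure S) (r : A -> pow A 2) (eps : pow A 2 -> A) :
  hom r -> hom eps -> (forall x, r (eps x) = x) ->
  opset_eq (gen (opset_union (End A) (opset_range (fun _ : 'I_1 => existT _ 2 eps))))
           (Pol A).
Proof.
move=> hom_r hom_eps epsK n n_gt0 f; split.
  apply: gen_least n_gt0 f; first exact: Pol_clone.
  move=> k _ g [[_ Pg] | [_ E]] //.
  exact: (eq_rect (existT _ 2 eps) (fun o : op A => Pol A (projT1 o) (projT2 o)) hom_eps _ E).
move=> Pf C HC HM; apply: (Pol_sub_clone hom_r epsK HC) => //.
- by move=> k k_gt0 g Eg; apply: HM k_gt0 _ _; left.
- by apply: HM => //; right; exists ord0.
Qed.

Definition ess_unary X : opset X :=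
  fun n f => exists (i : 'I_n) (g : X -> X), forall x, f x = g (x i).

Lemma ess_unary_clone X : is_clone (@ess_unary X).
Proof.
split=> [n i | n m f g _ _ [i [h Hh]] Hg]; first by exists i, id.
have [j [h' Hh']] := Hg i.
by exists j, (h \o h') => x; rewrite Hh Hh'.
Qed.

Lemma End_ess_unary S (A : structure S) : opset_sub (End A) (@ess_unary A).
Proof.
move=> [|[|n]] // _ f [// _]; exists ord0, (fun a => f (fun _ => a)) => x.
by congr f; apply: functional_extensionality => i; rewrite (ord1 i).
Qed.

(* On a set with two distinct elements no injective operation of arity at
   least 2 is essentially unary: it must see some argument other than i. *)
Lemma injective_not_ess_unary X (a b : X) n (f : ('I_n.+2 -> X) -> X) :
  a <> b -> injective f -> ~ ess_unary f.
Proof.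
move=> ab f_inj [i [g Hg]].
pose x : 'I_n.+2 -> X := fun _ => a.
pose y : 'I_n.+2 -> X := fun k => if k == i then a else b.
have /f_inj/(congr1 (fun z => z (lift i ord0))) : f x = f y.
  by rewrite !Hg /y eqxx.
by rewrite /x /y eq_sym (negbTE (neq_lift i ord0)).
Qed.

Lemma ess_unary_not_gen_Pol S (A : structure S) (M : opset A) (e : pow A 2 -> A) :
  (exists a b : A, a <> b) -> Pol A 2 e -> injective e ->
  opset_sub M (@ess_unary A) -> ~ opset_eq (gen M) (Pol A).
Proof.
move=> [a [b ab]] Pe e_inj MU genM.
have gen_e : @gen _ M 2 e by apply/genM.
have := gen_least (@ess_unary_clone A) MU (ltn0Sn 1) gen_e.
exact: (injective_not_ess_unary ab e_inj).
Qed.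

(* Rank one: the inclusion of a section gives a one-element generating set,
   and no generating set over End A is empty. *)
Theorem proposition5p2 (S : signature) (A : structure S)
    (Hnontriv : exists a b : A, a <> b)
    (r : A -> pow A 2) (Hr : retraction r) :
  rel_rank_eq (Pol A) (End A) 1 /\
  forall eps : pow A 2 -> A,
    hom eps -> (forall x, r (eps x) = x) ->
    opset_eq (gen (opset_union (End A) (opset_range (fun _ : 'I_1 => existT _ 2 eps))))
             (Pol A) /\
    ~ opset_eq (gen (End A)) (Pol A).
Proof.
have [hom_r [iota [hom_iota iotaK]]] := Hr.
have no_unary_gen (M : opset A) : opset_sub M (@ess_unary A) -> ~ opset_eq (gen M) (Pol A).
  exact: ess_unary_not_gen_Pol Hnontriv hom_iota (can_inj iotaK).
split; last first.
  move=> eps hom_eps epsK; split; first exact: gen_End_section hom_r hom_eps epsK.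
  exact/no_unary_gen/End_ess_unary.
split.
  exists (fun _ => existT _ 2 iota); split; first by move=> j k _; rewrite !ord1.
  by split=> [j|]; [exact: hom_iota | exact: gen_End_section hom_r hom_iota iotaK].
case=> [|//] _ [N [_ [_ /no_unary_gen]]]; apply.
move=> n n_gt0 f [Ef | [[]] //]; exact: End_ess_unary n_gt0 f Ef.
Qed.
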